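(* Assume $\bar p=\mu\cdot\mathbf p=1/2$ and let $\mathbf r,\tilde{\mathbf r}$ be as in the context. Then $\mathbf r+\tilde{\mathbf r}=(\mu\cdot(\mathbf r+\tilde{\mathbf r}))\mathbf 1$; in particular $\mathbf r+\tilde{\mathbf r}$ is a constant multiple of $\mathbf 1$.
   Context: Let $\mathcal R=\{1,\dots,N\}$ and let $K$ be a stochastic matrix on $\mathcal R$ whose Markov chain has a unique closed irreducible subset; let $\mu$ (row vector) be its unique stationary distribution. Fix $p:\mathcal R\to(0,1)$, $\mathbf p=(p(1),\dots,p(N))^t$, $\mathbf 1$ the all-ones column vector, $I$ the identity, $D_p$ the diagonal matrix with entries $p(i)$, $D_{1-p}=I-D_p$. Define $\mathbf r=(I-K+2(\mathbf 1-\mathbf p)\mu D_{1-p}K)^{-1}\mathbf p-\mathbf 1$ and $\tilde{\mathbf r}=(I-K+2\mathbf p\,\mu D_pK)^{-1}(\mathbf 1-\mathbf p)-\mathbf 1$. *)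

From HB Require Import structures.
From mathcomp Require Import all_boot all_order all_algebra.
Set Implicit Arguments. Unset Strict Implicit. Unset Printing Implicit Defensive.
Import Order.TTheory GRing.Theory Num.Theory.
Local Open Scope ring_scope.

Section Defs.
Variables (R : realFieldType) (N : nat).

Definition stochastic (K : 'M[R]_N) : Prop :=
  (forall i j, 0 <= K i j) /\ (forall i, \sum_j K i j = 1).

Definition trans_rel (K : 'M[R]_N) : rel 'I_N := fun i j => 0 < K i j.

Definition closed_set (K : 'M[R]_N) (C : {set 'I_N}) : Prop :=
  forall i j, i \in C -> 0 < K i j -> j \in C.

Definition closed_irreducible (K : 'M[R]_N) (C : {set 'I_N}) : Prop :=
  [/\ C != set0, closed_set K C &
      forall i j, i \in C -> j \in C -> connect (trans_rel K) i j].

Definition unique_closed_irreducible (K : 'M[R]_N) : Prop :=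
  exists C, closed_irreducible K C /\ forall C', closed_irreducible K C' -> C' = C.

Definition stationary_distribution (K : 'M[R]_N) (mu : 'rV[R]_N) : Prop :=
  [/\ forall i, 0 <= mu 0 i, \sum_i mu 0 i = 1 & mu *m K = mu].

Definition ones : 'cV[R]_N := const_mx 1.
Definition pvec (p : 'I_N -> R) : 'cV[R]_N := \col_i p i.
Definition Dmat (p : 'I_N -> R) : 'M[R]_N := diag_mx (\row_i p i).
Definition Dmat1 (p : 'I_N -> R) : 'M[R]_N := diag_mx (\row_i (1 - p i)).

Definition rvec (K : 'M[R]_N) (mu : 'rV[R]_N) (p : 'I_N -> R) : 'cV[R]_N :=
  invmx (1%:M - K + 2%:R *: ((ones - pvec p) *m (mu *m Dmat1 p *m K)))
    *m pvec p - ones.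

Definition rtvec (K : 'M[R]_N) (mu : 'rV[R]_N) (p : 'I_N -> R) : 'cV[R]_N :=
  invmx (1%:M - K + 2%:R *: (pvec p *m (mu *m Dmat p *m K)))
    *m (ones - pvec p) - ones.

End Defs.

From HB Require Import structures.
From mathcomp Require Import all_boot all_order all_algebra.
From mathcomp Require Import lra.
Import Order.TTheory GRing.Theory Num.Theory.
Set Implicit Arguments. Unset Strict Implicit.
Local Open Scope ring_scope.

(* Write [M := I - K + v w] for a rank-one perturbation of [I - K].  Since
   [mu (I - K) = 0], applying [mu] to [M x = u] gives [mu u = (mu v) (w x)], so
   when [mu v = 1] the solution satisfies [(I - K) x = u - (mu u) v].  For [r]
   ([u = p], [v = 2 (1 - p)], [mu p = 1/2]) this reads [(I - K) r = p - (1 - p)];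
   [r~] is [r] for [1 - p], so [(I - K) r~ = (1 - p) - p] and [r + r~] is harmonic.
   The set where a harmonic vector attains its maximum is closed, hence contains
   the unique closed irreducible class; applied to [z] and [-z] this forces every
   harmonic vector to be constant, the constant being its [mu]-average.  The same
   fact shows that [M] has trivial kernel, i.e. is invertible. *)

Section Reachability.
Variables (R : realFieldType) (N : nat) (K : 'M[R]_N).

Definition reach (i : 'I_N) : {set 'I_N} := [set k | connect (trans_rel K) i k].

Lemma reach_closed i : closed_set K (reach i).
Proof.
by move=> j k; rewrite !inE => ij jk; apply: connect_trans ij (connect1 jk).
Qed.

Lemma reach_sub_closed S i : closed_set K S -> i \in S -> reach i \subset S.
Proof.
move=> clS Si; apply/subsetP => k; rewrite inE => /connectP [s + ->].
by elim: s i Si => //= j s IH i Si /andP[ij]; apply: IH (clS _ _ Si ij).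
Qed.

(* A state of [S] whose reachable set has minimal size generates an
   irreducible class. *)
Lemma closed_irreducible_sub S i : closed_set K S -> i \in S ->
  exists2 C, closed_irreducible K C & C \subset S.
Proof.
move=> clS Si; have [m Sm minm] := arg_minnP (fun i => #|reach i|) Si.
have reach_mS := reach_sub_closed clS Sm.
exists (reach m) => //; split; last 1 first.
- move=> j k; rewrite !inE => mj mk.
  have sub_jm : reach j \subset reach m.
    by apply/subsetP => l; rewrite !inE; apply: connect_trans mj.
  have Sj : j \in S by apply: (subsetP reach_mS); rewrite inE.
  have /subsetP/(_ m) : reach m \subset reach j.
    by rewrite -(geq_leqif (subset_leqif_card sub_jm)) minm.
  by rewrite !inE connect0 => /(_ isT) jm; apply: connect_trans jm mk.
- by apply/set0Pn; exists m; rewrite inE connect0.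
- exact: reach_closed.
Qed.

End Reachability.

Section Harmonic.
Variables (R : realFieldType) (N : nat) (K : 'M[R]_N).
Hypothesis stochK : stochastic K.

Lemma stochastic_ones : K *m ones R N = ones R N.
Proof.
case: stochK => _ sumK; apply/matrixP => i j; rewrite !mxE -(sumK i).
by apply: eq_bigr => k _; rewrite mxE mulr1.
Qed.

Lemma defect0_harmonic (z : 'cV[R]_N) : (1%:M - K) *m z = 0 -> K *m z = z.
Proof. by rewrite mulmxBl mul1mx => /eqP; rewrite subr_eq0 eq_sym => /eqP. Qed.

Lemma harmonic_argmax_closed (z : 'cV[R]_N) m : K *m z = z ->
  (forall i, z i 0 <= z m 0) -> closed_set K [set i | z i 0 == z m 0].
Proof.
case: stochK => K_ge0 sumK harm_z max_m i j; rewrite !inE => /eqP zi Kij.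
have gap_ge0 k : true -> 0 <= K i k * (z m 0 - z k 0).
  by move=> _; rewrite mulr_ge0 // subr_ge0.
have gap0 : \sum_k K i k * (z m 0 - z k 0) = 0.
  under eq_bigr do rewrite mulrBr.
  rewrite sumrB -mulr_suml sumK mul1r.
  have -> : \sum_k K i k * z k 0 = z i 0 by rewrite -{2}harm_z mxE.
  by rewrite zi subrr.
move/eqP: (psumr_eq0P gap_ge0 gap0 (i := j) isT).
by rewrite mulf_eq0 gt_eqF //= subr_eq0 eq_sym.
Qed.

Lemma harmonic_const (z : 'cV[R]_N) : unique_closed_irreducible K ->
  K *m z = z -> exists t, z = t *: ones R N.
Proof.
move=> [C [[/set0Pn[c Cc] _ _] uniqC]] harm_z.
have le_c (y : 'cV[R]_N) : K *m y = y -> forall i, y i 0 <= y c 0.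
  move=> harm_y; have [m _ max_m] := arg_maxP (fun i => y i 0) (isT : xpredT c).
  have max_m' i : y i 0 <= y m 0 by apply: max_m.
  have clS := harmonic_argmax_closed harm_y max_m'.
  have [|C' /uniqC -> /subsetP/(_ c Cc)] := closed_irreducible_sub clS (i := m).
    by rewrite inE.
  by rewrite inE => /eqP -> i; apply: max_m.
exists (z c 0); apply/matrixP => i j; rewrite (ord1 j) !mxE mulr1.
apply/le_anti; rewrite le_c //=.
by have := le_c (- z) _ i; rewrite !mxE lerN2; apply; rewrite mulmxN harm_z.
Qed.

End Harmonic.

Section RankOnePerturbation.
Variables (R : realFieldType) (N : nat) (K : 'M[R]_N) (mu : 'rV[R]_N).
Hypotheses (stochK : stochastic K) (uniqK : unique_closed_irreducible K).
Hypothesis muK : mu *m K = mu.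

Lemma stationary_perturbation (v : 'cV[R]_N) (w : 'rV[R]_N) (x : 'cV[R]_N) :
  mu *m ((1%:M - K + v *m w) *m x) = (mu *m v) *m (w *m x).
Proof. by rewrite mulmxA mulmxDr mulmxBr mulmx1 muK subrr add0r !mulmxA. Qed.

Lemma perturbation_unitmx (v : 'cV[R]_N) (w : 'rV[R]_N) :
  (mu *m v) 0 0 != 0 -> (w *m ones R N) 0 0 != 0 ->
  1%:M - K + v *m w \in unitmx.
Proof.
move=> mu_v w_ones; set M := 1%:M - K + v *m w.
suff ker0 (z : 'cV[R]_N) : M *m z = 0 -> z = 0.
  rewrite -unitmx_tr -row_free_unit; apply: inj_row_free => u /(congr1 trmx).
  by rewrite trmx_mul trmxK trmx0 => /ker0 /(congr1 trmx); rewrite trmxK trmx0.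
move=> Mz; have wz : w *m z = 0.
  have := stationary_perturbation v w z.
  rewrite Mz mulmx0 [w *m z]mx11_scalar mul_mx_scalar => /matrixP/(_ 0 0).
  rewrite [LHS]mxE [RHS]mxE => /esym/eqP.
  rewrite mulf_eq0 (negbTE mu_v) orbF => /eqP wz0.
  by apply/matrixP => i j; rewrite !ord1 wz0 !mxE mul0rn.
have harm_z : K *m z = z.
  by apply: defect0_harmonic; rewrite -Mz /M [RHS]mulmxDl -mulmxA wz mulmx0 addr0.
have [t zt] := harmonic_const stochK uniqK harm_z.
move: wz; rewrite zt -scalemxAr => /matrixP/(_ 0 0); rewrite [LHS]mxE [RHS]mxE.
by move=> /eqP; rewrite mulf_eq0 (negbTE w_ones) orbF => /eqP ->; rewrite scale0r.
Qed.

Lemma perturbation_solve (v u : 'cV[R]_N) (w : 'rV[R]_N) :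
  (mu *m v) 0 0 = 1 -> (w *m ones R N) 0 0 != 0 ->
  (1%:M - K) *m (invmx (1%:M - K + v *m w) *m u) = u - (mu *m u) 0 0 *: v.
Proof.
move=> mu_v w_ones; set M := 1%:M - K + v *m w; set x := invmx M *m u.
have unitM : M \in unitmx by apply: perturbation_unitmx; rewrite // mu_v oner_eq0.
have Mx : M *m x = u by rewrite mulmxA mulmxV ?mul1mx.
have wx : w *m x = ((mu *m u) 0 0)%:M.
  rewrite -Mx stationary_perturbation [mu *m v]mx11_scalar mu_v mul1mx.
  exact: mx11_scalar.
have expand : M *m x = (1%:M - K) *m x + (mu *m u) 0 0 *: v.
  by rewrite /M mulmxDl -mulmxA wx mul_mx_scalar.
by rewrite Mx in expand; rewrite {1}expand addrK.
Qed.

End RankOnePerturbation.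

Section HalfMean.
Variables (R : realFieldType) (N : nat) (K : 'M[R]_N) (mu : 'rV[R]_N).
Hypotheses (stochK : stochastic K) (uniqK : unique_closed_irreducible K).
Hypothesis statK : stationary_distribution K mu.

Lemma stationary_mean_ones : (mu *m ones R N) 0 0 = 1.
Proof.
case: statK => _ sum_mu _; rewrite mxE -sum_mu.
by apply: eq_bigr => i _; rewrite mxE mulr1.
Qed.

Lemma mean_complement_half (p : 'I_N -> R) : (mu *m pvec p) 0 0 = 1 / 2%:R ->
  (mu *m (ones R N - pvec p)) 0 0 = 1 / 2%:R.
Proof. by move=> mu_p; rewrite mulmxBr mxE stationary_mean_ones mxE mu_p; lra. Qed.

Lemma pvec_complement (p : 'I_N -> R) : pvec (fun i => 1 - p i) = ones R N - pvec p.
Proof. by apply/matrixP => i j; rewrite !mxE. Qed.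

Lemma Dmat1_complement (p : 'I_N -> R) : Dmat1 (fun i => 1 - p i) = Dmat p.
Proof. by apply/matrixP => i j; rewrite !mxE subKr. Qed.

Lemma Dmat1_ones (p : 'I_N -> R) : Dmat1 p *m ones R N = ones R N - pvec p.
Proof. by apply/matrixP => i j; rewrite mul_diag_mx !mxE mulr1. Qed.

Lemma rtvec_complement (p : 'I_N -> R) : rtvec K mu p = rvec K mu (fun i => 1 - p i).
Proof. by rewrite /rtvec /rvec pvec_complement Dmat1_complement subKr. Qed.

Lemma rvec_defect (p : 'I_N -> R) : (mu *m pvec p) 0 0 = 1 / 2%:R ->
  (1%:M - K) *m rvec K mu p = pvec p - (ones R N - pvec p).
Proof.
move=> mu_p; have mu_q := mean_complement_half mu_p.
have [_ _ muK] := statK.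
have I_K_ones : (1%:M - K) *m ones R N = 0.
  by rewrite mulmxBl mul1mx stochastic_ones // subrr.
rewrite /rvec mulmxBr I_K_ones subr0 scalemxAl.
rewrite (perturbation_solve stochK uniqK muK); last first.
- by rewrite -!mulmxA stochastic_ones // Dmat1_ones mu_q mul1r invr_eq0 pnatr_eq0.
- by rewrite -scalemxAr mxE mu_q; lra.
by rewrite mu_p scalerA mul1r mulVf ?pnatr_eq0 // scale1r.
Qed.

End HalfMean.

Theorem lemma4p4 (R : realFieldType) (N : nat) (K : 'M[R]_N) (mu : 'rV[R]_N)
    (p : 'I_N -> R) :
  stochastic K ->
  unique_closed_irreducible K ->
  stationary_distribution K mu ->
  (forall i, 0 < p i < 1) ->
  (mu *m pvec p) 0 0 = 1 / 2%:R ->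
  rvec K mu p + rtvec K mu p
    = ((mu *m (rvec K mu p + rtvec K mu p)) 0 0) *: ones R N.
Proof.
move=> stochK uniqK statK _ mu_p.
have mu_q := mean_complement_half statK mu_p.
rewrite -pvec_complement in mu_q.
have harm : K *m (rvec K mu p + rtvec K mu p) = rvec K mu p + rtvec K mu p.
  apply: defect0_harmonic; rewrite mulmxDr rtvec_complement !rvec_defect //.
  by rewrite pvec_complement subKr addrC subrKA subrr.
have [t ->] := harmonic_const stochK uniqK harm.
by rewrite -scalemxAr mxE (stationary_mean_ones statK) mulr1.
Qed.
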